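(* Let $\Lambda$ be an artin algebra and let $(g_i: X\to M_i)_{i\in I}$ be a family of nonzero maps of $\Lambda$-modules with each $M_i$ indecomposable. Then this family is a fork if and only if $g_i\notin\sum_{j\neq i}\operatorname{Hom}(M_j,M_i)\,g_j$ for all $i\in I$.
   Context: Modules are finite length left $\Lambda$-modules. A map $g: X\to M$ is left minimal if the image of $g$ is not contained in any proper direct summand of $M$. A family of maps $(g_i: X\to M_i)_{i\in I}$ is a fork if for every finite subset $J\subseteq I$ the map $(g_i)_{i\in J}: X\to\bigoplus_{i\in J}M_i$ is left minimal. Here $\sum_{j\neq i}\operatorname{Hom}(M_j,M_i)g_j$ denotes the set of finite sums of maps $p_jg_j$ with $j\neq i$ and $p_j: M_j\to M_i$. *)

From Stdlib Require List.
From HB Require Import structures.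
From mathcomp Require Import all_boot all_algebra.
Set Implicit Arguments. Unset Strict Implicit.
Import GRing.Theory.
Local Open Scope ring_scope.
Section DS.
Variables (L : pzRingType) (J : finType) (M : J -> lmodType L).
Definition dsum := {dffun forall j : J, M j}.
HB.instance Definition _ := Choice.on dsum.
Definition ds0 : dsum := [ffun j => 0].
Definition dsadd (u v : dsum) : dsum := [ffun j => u j + v j].
Definition dsopp (u : dsum) : dsum := [ffun j => - u j].
Definition dsscale (a : L) (u : dsum) : dsum := [ffun j => a *: u j].
Lemma dsaddA : associative dsadd.
Proof. by move=> u v w; apply/ffunP=> j; rewrite !ffunE addrA. Qed.
Lemma dsaddC : commutative dsadd.
Proof. by move=> u v; apply/ffunP=> j; rewrite !ffunE addrC. Qed.
Lemma dsadd0 : left_id ds0 dsadd.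
Proof. by move=> u; apply/ffunP=> j; rewrite !ffunE add0r. Qed.
HB.instance Definition _ := GRing.isNmodule.Build dsum dsaddA dsaddC dsadd0.
Lemma dsaddN : left_inverse ds0 dsopp dsadd.
Proof. by move=> u; apply/ffunP=> j; rewrite !ffunE addNr. Qed.
HB.instance Definition _ := GRing.Nmodule_isZmodule.Build dsum dsaddN.
Lemma dsscaleA a b (u : dsum) : dsscale a (dsscale b u) = dsscale (a * b) u.
Proof. by apply/ffunP=> j; rewrite !ffunE scalerA. Qed.
Lemma dsscale1 : left_id 1 dsscale.
Proof. by move=> u; apply/ffunP=> j; rewrite !ffunE scale1r. Qed.
Lemma dsscaleDr : right_distributive dsscale +%R.
Proof. by move=> a u v; apply/ffunP=> j; rewrite !ffunE scalerDr. Qed.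
Lemma dsscaleDl (u : dsum) : {morph dsscale^~ u : a b / a + b}.
Proof. by move=> a b; apply/ffunP=> j; rewrite !ffunE scalerDl. Qed.
HB.instance Definition _ := GRing.Zmodule_isLmodule.Build L dsum dsscaleA dsscale1 dsscaleDr dsscaleDl.
End DS.

Definition is_submod (L : pzRingType) (V : lmodType L) (S : V -> Prop) : Prop :=
  [/\ S 0, (forall u v, S u -> S v -> S (u + v)) & (forall (a : L) u, S u -> S (a *: u))].

Definition complementary (L : pzRingType) (V : lmodType L) (S T : V -> Prop) : Prop :=
  [/\ is_submod S, is_submod T,
      (forall v, S v -> T v -> v = 0)
    & (forall v, exists s t, [/\ S s, T t & v = s + t])].

Definition direct_summand (L : pzRingType) (V : lmodType L) (S : V -> Prop) : Prop :=
  exists T, complementary S T.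

Definition proper_sub (L : pzRingType) (V : lmodType L) (S : V -> Prop) : Prop :=
  exists v, ~ S v.

Definition left_minimal (L : pzRingType) (X : Type) (V : lmodType L) (g : X -> V) : Prop :=
  ~ exists S : V -> Prop, [/\ direct_summand S, proper_sub S & forall x, S (g x)].

Definition indecomposable (L : pzRingType) (V : lmodType L) : Prop :=
  (exists v : V, v <> 0) /\
  forall S T : V -> Prop, complementary S T ->
    (forall v, S v -> v = 0) \/ (forall v, T v -> v = 0).

Definition finite_length (L : pzRingType) (V : lmodType L) : Prop :=
  exists n : nat, forall (m : nat) (S : nat -> V -> Prop),
    (forall k, is_submod (S k)) ->
    (forall k, (k < m)%N -> (forall v, S k v -> S k.+1 v) /\ (exists v, S k.+1 v /\ ~ S k v)) ->
    (m <= n)%N.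

Definition is_ideal (k : comNzRingType) (A : k -> Prop) : Prop :=
  [/\ A 0, (forall x y, A x -> A y -> A (x + y)) & (forall a x, A x -> A (a * x))].

Definition artinian_ring (k : comNzRingType) : Prop :=
  forall A : nat -> k -> Prop, (forall n, is_ideal (A n)) ->
    (forall n x, A n.+1 x -> A n x) ->
    exists n, forall m, (n <= m)%N -> forall x, A n x -> A m x.

Definition artin_algebra (L : pzRingType) : Prop :=
  exists (k : comNzRingType) (phi : {rmorphism k -> L}),
    [/\ artinian_ring k,
        (forall a x, phi a * x = x * phi a)
      & exists (n : nat) (b : 'I_n -> L), forall x : L,
          exists c : 'I_n -> k, x = \sum_(i < n) phi (c i) * b i].

(* finite subsets J of I are given as injections f : J -> I from a finite type;
   the induced map X -> (+)_{j in J} M_(f j) is x |-> (g_(f j) x)_j *)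
Definition fork (L : pzRingType) (X : lmodType L) (I : Type) (M : I -> lmodType L)
    (g : forall i, X -> M i) : Prop :=
  forall (J : finType) (f : J -> I), injective f ->
    left_minimal (fun x : X => [ffun j => g (f j) x] : dsum (fun j => M (f j))).

Definition in_sum_others (L : pzRingType) (X : lmodType L) (I : Type) (M : I -> lmodType L)
    (g : forall i, X -> M i) (i : I) : Prop :=
  exists (s : seq I) (p : forall j, {linear M j -> M i}),
    (forall j, Stdlib.Lists.List.In j s -> j <> i) /\
    forall x, g i x = \sum_(j <- s) p j (g j x).

(* If the [g_i] form a fork and [g_i = sum_j p_j g_j], then [v |-> v_i - sum_j p_j v_j] is a
   split epimorphism from the sum of the [M_j] (over [i] and the [j]'s) onto [M_i] that kills
   the image of [X]; its kernel is a proper direct summand containing that image.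
   Conversely, if [(g_j)_j : X -> V = (+)_j M_j] is not left minimal, its image lies in the
   complement [C] of a nonzero summand [U], which by finite length may be chosen
   indecomposable, so that [End(U)] is local by Fitting's lemma. With [e] the projection onto
   [U] along [C], the identity of [U] is the sum of the [e \o inj_k \o proj_k], so some
   [proj_k \o e \o inj_k] is not nilpotent, hence an automorphism of the indecomposable [M_k].
   Applying [proj_k \o e] to elements of [C], on which [e] vanishes, expresses their [k]-th
   coordinate linearly through the others. *)

From HB Require Import structures.
From mathcomp Require Import all_boot all_algebra zify.
From Stdlib Require Import Classical ClassicalEpsilon ProofIrrelevance FunctionalExtensionality.
Set Implicit Arguments. Unset Strict Implicit.
Import GRing.Theory.
Local Open Scope ring_scope.

Section Submodules.
Variables (L : pzRingType) (V : lmodType L).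
Implicit Types (U : V -> Prop) (phi : V -> V).

Lemma submod0 U : is_submod U -> U 0. Proof. by case. Qed.
Lemma submodD U u v : is_submod U -> U u -> U v -> U (u + v).
Proof. by case=> _ + _; apply. Qed.
Lemma submodZ U a u : is_submod U -> U u -> U (a *: u).
Proof. by case=> _ _; apply. Qed.
Lemma submodN U u : is_submod U -> U u -> U (- u).
Proof. by move=> HU Hu; rewrite -scaleN1r; apply: submodZ. Qed.
Lemma submodB U u v : is_submod U -> U u -> U v -> U (u - v).
Proof. by move=> HU Hu Hv; apply: submodD => //; apply: submodN. Qed.

Lemma submodT : is_submod (fun _ : V => True). Proof. by []. Qed.

Lemma complementaryC U C : complementary U C -> complementary C U.
Proof.
case=> HU HC HUC HV; split=> // [v Cv Uv|v]; first exact: HUC.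
by have [u [c [Uu Cc ->]]] := HV v; exists c, u; rewrite addrC.
Qed.

(* An endomorphism of the submodule [U] is modelled by any map [V -> V] that is linear on
   [U] and stabilises it; its values outside [U] are irrelevant. *)
Definition linear_on U phi :=
  [/\ forall u v, U u -> U v -> phi (u + v) = phi u + phi v,
      forall a u, U u -> phi (a *: u) = a *: phi u
    & forall u, U u -> U (phi u)].

Definition nilpotent_on U phi := exists n, forall u, U u -> iter n phi u = 0.
Definition injective_on U phi := forall u, U u -> phi u = 0 -> u = 0.
Definition surjective_on U phi := forall u, U u -> exists v, U v /\ phi v = u.

Definition indecomposable_on U := forall A B : V -> Prop,
  is_submod A -> is_submod B -> (forall v, A v -> U v) -> (forall v, B v -> U v) ->
  (forall v, A v -> B v -> v = 0) ->
  (forall u, U u -> exists a b, [/\ A a, B b & u = a + b]) ->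
  (forall v, A v -> v = 0) \/ (forall v, B v -> v = 0).

Lemma indecomposable_onT : indecomposable V -> indecomposable_on (fun _ => True).
Proof.
case=> _ HV A B HA HB _ _ HAB HAB'; apply: HV; split=> // v.
by have [a [b [Aa Bb ->]]] := HAB' v I; exists a, b.
Qed.

Section LinearOn.
Variables (U : V -> Prop) (phi : V -> V).
Hypotheses (HU : is_submod U) (Hphi : linear_on U phi).

Lemma linear_on_stable u : U u -> U (phi u). Proof. by case: Hphi => _ _; apply. Qed.
Lemma linear_onD u v : U u -> U v -> phi (u + v) = phi u + phi v.
Proof. by case: Hphi => + _ _; apply. Qed.
Lemma linear_onZ a u : U u -> phi (a *: u) = a *: phi u.
Proof. by case: Hphi => _ + _; apply. Qed.
Lemma linear_on0 : phi 0 = 0.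
Proof. by rewrite -(scale0r 0) linear_onZ ?scale0r //; apply: submod0. Qed.
Lemma linear_onN u : U u -> phi (- u) = - phi u.
Proof. by move=> Uu; rewrite -scaleN1r linear_onZ // scaleN1r. Qed.
Lemma linear_onB u v : U u -> U v -> phi (u - v) = phi u - phi v.
Proof. by move=> Uu Uv; rewrite linear_onD ?linear_onN //; apply: submodN. Qed.

Lemma linear_on_iter n : linear_on U (iter n phi).
Proof.
elim: n => [|n [IHD IHZ IHU]] //; split=> [u v Uu Uv|a u Uu|u Uu]; rewrite !iterS.
- by rewrite IHD // linear_onD //; apply: IHU.
- by rewrite IHZ // linear_onZ //; apply: IHU.
- by apply: linear_on_stable; apply: IHU.
Qed.

Lemma injective_on_iter n : injective_on U phi -> injective_on U (iter n phi).
Proof.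
move=> inj; elim: n => [|n IHn] u Uu //; rewrite iterS.
have Uit : U (iter n phi u) by case: (linear_on_iter n) => _ _; apply.
by move/(inj _ Uit); apply: IHn.
Qed.
End LinearOn.

Lemma linear_on_comp U phi psi :
  linear_on U phi -> linear_on U psi -> linear_on U (phi \o psi).
Proof.
move=> Hphi Hpsi; split=> [u v Uu Uv|a u Uu|u Uu] /=.
- by rewrite (linear_onD Hpsi) // (linear_onD Hphi) //; exact: (linear_on_stable Hpsi).
- by rewrite (linear_onZ Hpsi) // (linear_onZ Hphi) //; exact: (linear_on_stable Hpsi).
- by apply: (linear_on_stable Hphi); apply: (linear_on_stable Hpsi).
Qed.

Lemma linear_on_add U phi psi : is_submod U ->
  linear_on U phi -> linear_on U psi -> linear_on U (fun v => phi v + psi v).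
Proof.
move=> HU Hphi Hpsi; split=> [u v Uu Uv|a u Uu|u Uu].
- by rewrite (linear_onD Hphi) // (linear_onD Hpsi) // addrACA.
- by rewrite (linear_onZ Hphi) // (linear_onZ Hpsi) // scalerDr.
- by apply: submodD; [| exact: (linear_on_stable Hphi) | exact: (linear_on_stable Hpsi)].
Qed.

Lemma linear_onT phi : linear_on (fun _ => True) phi -> linear phi.
Proof. by move=> Hphi a u v; rewrite (linear_onD Hphi) // (linear_onZ Hphi). Qed.

Lemma linear_linear_on U (f : {linear V -> V}) :
  (forall u, U u -> U (f u)) -> linear_on U f.
Proof. by move=> fU; split=> *; rewrite ?linearD ?linearZ //; apply: fU. Qed.

Lemma ascending_chain_stalls (S : nat -> V -> Prop) : finite_length V ->
  (forall k, is_submod (S k)) -> (forall k v, S k v -> S k.+1 v) ->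
  exists n, forall v, S n.+1 v -> S n v.
Proof.
move=> [N HN] HS incS; apply: NNPP => stalls.
suff: (N.+1 <= N)%N by rewrite ltnn.
apply: HN => // k _; split; first exact: incS.
apply: NNPP => strict; apply: stalls; exists k => v Sv.
by apply: NNPP => nSv; apply: strict; exists v.
Qed.

Lemma descending_chain_stalls (S : nat -> V -> Prop) : finite_length V ->
  (forall k, is_submod (S k)) -> (forall k v, S k.+1 v -> S k v) ->
  exists n, forall v, S n v -> S n.+1 v.
Proof.
move=> [N HN] HS decS; apply: NNPP => stalls.
suff: (N.+1 <= N)%N by rewrite ltnn.
apply: (HN N.+1 (fun k => S (N.+1 - k)%N)) => // k ltkN.
rewrite subSS subSn //; split; first exact: decS.
apply: NNPP => strict; apply: stalls; exists (N - k)%N => v Sv.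
by apply: NNPP => nSv; apply: strict; exists v.
Qed.

Section Fitting.
Variables (U : V -> Prop) (phi : V -> V).
Hypotheses (HU : is_submod U) (Hphi : linear_on U phi).

Definition iter_ker k u := U u /\ iter k phi u = 0.
Definition iter_im k v := exists u, U u /\ v = iter k phi u.

Let Hiter k := linear_on_iter Hphi k.

Lemma iter_ker_submod k : is_submod (iter_ker k).
Proof.
split.
- by split; [apply: submod0 | apply: linear_on0 (Hiter k)].
- move=> u v [Uu ku] [Uv kv]; split; first exact: submodD.
  by rewrite (linear_onD (Hiter k)) // ku kv addr0.
- move=> a u [Uu ku]; split; first exact: submodZ.
  by rewrite (linear_onZ (Hiter k)) // ku scaler0.
Qed.

Lemma iter_im_submod k : is_submod (iter_im k).
Proof.
split.
- by exists 0; split; [apply: submod0 | rewrite (linear_on0 HU (Hiter k))].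
- move=> _ _ [u [Uu ->]] [v [Uv ->]]; exists (u + v); split; first exact: submodD.
  by rewrite (linear_onD (Hiter k)).
- move=> a _ [u [Uu ->]]; exists (a *: u); split; first exact: submodZ.
  by rewrite (linear_onZ (Hiter k)).
Qed.

Lemma iter_ker_mono m n : (m <= n)%N -> forall u, iter_ker m u -> iter_ker n u.
Proof.
move=> lemn u [Uu mu]; split=> //.
by rewrite -(subnK lemn) iterD mu (linear_on0 HU (Hiter _)).
Qed.

Lemma iter_im_mono m n : (m <= n)%N -> forall v, iter_im n v -> iter_im m v.
Proof.
move=> lemn _ [u [Uu ->]]; exists (iter (n - m) phi u); split.
  exact: (linear_on_stable (Hiter _)).
by rewrite -iterD subnKC.
Qed.

(* Once the kernel chain stalls it is constant: apply the stalled step to [phi u]. *)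
Lemma iter_ker_stable n : (forall u, iter_ker n.+1 u -> iter_ker n u) ->
  forall m u, iter_ker (n + m) u -> iter_ker n u.
Proof.
move=> stalls m; elim: m => [|m IHm] u; first by rewrite addn0.
move=> [Uu mu]; apply: stalls; split=> //.
have [_] : iter_ker n (phi u).
  by apply: IHm; split; [exact: (linear_on_stable Hphi Uu) | rewrite -iterSr -addnS].
by rewrite iterSr.
Qed.

Lemma iter_im_stable n : (forall v, iter_im n v -> iter_im n.+1 v) ->
  forall m v, iter_im n v -> iter_im (n + m) v.
Proof.
move=> stalls m; elim: m => [|m IHm] v; first by rewrite addn0.
move=> /IHm [u [Uu ->]].
have [w [Uw Ew]] := stalls (iter n phi u) (ex_intro _ u (conj Uu erefl)).
exists w; split=> //.
by rewrite (addnC n m) iterD Ew -iterD !addnS addnC.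
Qed.

Lemma fitting : finite_length V -> exists p,
  (forall u, U u -> exists v w, [/\ iter_im p.+1 v, iter_ker p.+1 w & u = v + w]) /\
  (forall v, iter_im p.+1 v -> iter_ker p.+1 v -> v = 0).
Proof.
move=> finV.
have [n1 ker_stalls] := ascending_chain_stalls finV iter_ker_submod
  (fun k => iter_ker_mono (leqnSn k)).
have [n2 im_stalls] := descending_chain_stalls finV iter_im_submod
  (fun k => iter_im_mono (leqnSn k)).
set p := (n1 + n2).+1.
have ker2 u : iter_ker (p + p) u -> iter_ker p u.
  move=> ku; apply: (@iter_ker_mono n1); first by rewrite /p; lia.
  by move: ku; rewrite -(subnKC (_ : (n1 <= p + p)%N)); [apply: iter_ker_stable | lia].
have im2 v : iter_im p v -> iter_im (p + p) v.
  move=> /(@iter_im_mono n2 p) iv; rewrite -(subnKC (_ : (n2 <= p + p)%N)); last lia.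
  by apply: iter_im_stable => //; apply: iv; lia.
exists (n1 + n2); split.
- move=> u Uu.
  have [v [Uv Ev]] := im2 _ (ex_intro _ u (conj Uu erefl)).
  exists (iter p phi v), (u - iter p phi v); split; first by exists v.
  + split; first by apply: submodB => //; exact: (linear_on_stable (Hiter _) Uv).
    rewrite (linear_onB HU (Hiter p)) ?Ev ?iterD ?subrr //.
    exact: (linear_on_stable (Hiter _) Uv).
  + by rewrite addrC subrK.
- move=> _ [u [Uu ->]] [_ pu].
  suff [] : iter_ker p u by [].
  by apply: ker2; split; rewrite // iterD.
Qed.
End Fitting.

Section LocalEndomorphisms.
Variable U : V -> Prop.
Hypotheses (finV : finite_length V) (HU : is_submod U) (indU : indecomposable_on U)
  (nzU : exists u, U u /\ u <> 0).

Lemma nilpotent_or_bijective_on phi : linear_on U phi ->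
  nilpotent_on U phi \/ injective_on U phi /\ surjective_on U phi.
Proof.
move=> Hphi; have [p [decomp trivI]] := fitting HU Hphi finV.
have imU v : iter_im U phi p.+1 v -> U v.
  by case=> u [Uu ->]; apply: (linear_on_stable (linear_on_iter Hphi _)).
have [im0|ker0] := indU (iter_im_submod HU Hphi p.+1) (iter_ker_submod HU Hphi p.+1)
  imU (fun _ => @proj1 _ _) trivI decomp.
- by left; exists p.+1 => u Uu; apply: im0; exists u.
- right; split=> [u Uu phiu|u Uu].
    by apply: ker0; split; rewrite // iterSr phiu (linear_on0 HU (linear_on_iter Hphi p)).
  have [_ [w [[v [Uv ->]] /ker0 -> ->]]] := decomp u Uu.
  exists (iter p phi v); rewrite addr0 iterS; split=> //.
  exact: (linear_on_stable (linear_on_iter Hphi p)).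
Qed.

Lemma nilpotent_on_not_surjective phi : nilpotent_on U phi -> ~ surjective_on U phi.
Proof.
move=> [n nil] surj; case: nzU => u [Uu]; apply.
have [v [Uv <-]] : exists v, U v /\ iter n phi v = u.
  elim: n {nil} u Uu => [|n IHn] u Uu; first by exists u.
  have [w [Uw <-]] := surj u Uu; have [v [Uv <-]] := IHn w Uw.
  by exists v; rewrite iterS.
exact: nil.
Qed.

Lemma nilpotent_on_not_injective phi :
  linear_on U phi -> nilpotent_on U phi -> ~ injective_on U phi.
Proof.
move=> Hphi [n nil] /(injective_on_iter (n := n) Hphi) inj.
by case: nzU => u [Uu]; apply; apply: inj => //; apply: nil.
Qed.

Lemma nilpotent_on_not_id phi : (forall u, U u -> phi u = u) -> ~ nilpotent_on U phi.
Proof.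
move=> id_phi [n nil]; case: nzU => u [Uu]; apply; rewrite -(nil u Uu).
by elim: n {nil} => [|n IHn] //; rewrite iterS -IHn id_phi.
Qed.

Lemma linear_on_inverse w : linear_on U w -> injective_on U w -> surjective_on U w ->
  exists w', linear_on U w' /\ forall u, U u -> [/\ U (w' u), w (w' u) = u & w' (w u) = u].
Proof.
move=> Hw inj surj.
pose w' u := epsilon (inhabits 0) (fun v => U v /\ w v = u).
have w'K u : U u -> U (w' u) /\ w (w' u) = u.
  by move=> Uu; apply: (epsilon_spec _ _ (surj u Uu)).
have w_inj u v : U u -> U v -> w u = w v -> u = v.
  move=> Uu Uv wuv; apply/eqP; rewrite -subr_eq0; apply/eqP.
  by apply: inj; [apply: submodB | rewrite (linear_onB HU Hw) // wuv subrr].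
exists w'; split=> [|u Uu].
  2: have [U'wu ww'wu] := w'K _ (linear_on_stable Hw Uu).
  2: by have [U'u w'u] := w'K u Uu; split=> //; apply: w_inj.
split=> [u v Uu Uv|a u Uu|u Uu]; last by case: (w'K u Uu).
- have [[U'u wu] [U'v wv]] := (w'K u Uu, w'K v Uv).
  have [U'uv wuv] := w'K _ (submodD HU Uu Uv).
  by apply: w_inj; rewrite ?(linear_onD Hw) ?wu ?wv //; apply: submodD.
- have [U'u wu] := w'K u Uu; have [U'au wau] := w'K _ (submodZ a HU Uu).
  by apply: w_inj; rewrite ?(linear_onZ Hw) ?wu //; apply: submodZ.
Qed.

(* If [phi + psi] were invertible with inverse [w], then [phi w] and [psi w = 1 - phi w]
   could not both be nilpotent. *)
Lemma nilpotent_onD phi psi : linear_on U phi -> linear_on U psi ->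
  nilpotent_on U phi -> nilpotent_on U psi -> nilpotent_on U (fun v => phi v + psi v).
Proof.
move=> Hphi Hpsi nil_phi nil_psi.
have Hsum := linear_on_add HU Hphi Hpsi.
have [//|[inj surj]] := nilpotent_or_bijective_on Hsum.
have [w [Hw wK]] := linear_on_inverse Hsum inj surj.
have surjective_after_w chi : surjective_on U (chi \o w) -> surjective_on U chi.
  move=> surj_chi u Uu; have [v [Uv <-]] := surj_chi u Uu.
  by exists (w v); split=> //; case: (wK v Uv).
have [nil_phiw|[_ /(surjective_after_w phi)]] :=
  nilpotent_or_bijective_on (linear_on_comp Hphi Hw); last first.
  by move/(nilpotent_on_not_surjective nil_phi).
have Hpsiw := linear_on_comp Hpsi Hw.
have psiwE u : U u -> psi (w u) = u - phi (w u).
  by move=> Uu; have [_ wwu _] := wK u Uu; rewrite -{2}wwu addrC addKr.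
have inj_psiw : injective_on U (psi \o w).
  move=> u Uu /=; rewrite psiwE // => /eqP; rewrite subr_eq0 => /eqP fix_u.
  case: nil_phiw => n nil; rewrite -(nil u Uu).
  by elim: n {nil} => [|n IHn] //; rewrite iterS -IHn.
have [nil_psiw|[_ /(surjective_after_w psi)]] := nilpotent_or_bijective_on Hpsiw.
  by case: (nilpotent_on_not_injective Hpsiw nil_psiw).
by move/(nilpotent_on_not_surjective nil_psi).
Qed.

Lemma nilpotent_on_sum (T : Type) (r : seq T) (a : T -> V -> V) :
  (forall t, linear_on U (a t)) -> (forall t, nilpotent_on U (a t)) ->
  linear_on U (fun v => \sum_(t <- r) a t v) /\ nilpotent_on U (fun v => \sum_(t <- r) a t v).
Proof.
move=> Ha nil_a; elim: r => [|t r [IHlin IHnil]].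
  under [fun v => _]functional_extensionality => v do rewrite big_nil.
  split; last by exists 1%N.
  by split=> *; rewrite ?addr0 ?scaler0 //; apply: submod0.
under [fun v => _]functional_extensionality => v do rewrite big_cons.
by split; [apply: linear_on_add | apply: nilpotent_onD].
Qed.
End LocalEndomorphisms.

End Submodules.

Definition mkLinear (L : pzRingType) (U V : lmodType L) (f : U -> V) (fL : linear f) :
  {linear U -> V} := HB.pack f (GRing.isLinear.Build L U V *:%R f fL).

Section DirectSum.
Variables (L : pzRingType) (J : finType) (N : J -> lmodType L).
Implicit Types (u v : dsum N).

Lemma dsumD u v j : (u + v) j = u j + v j. Proof. by rewrite /GRing.add /= ffunE. Qed.
Lemma dsumZ a v j : (a *: v) j = a *: v j. Proof. by rewrite /GRing.scale /= ffunE. Qed.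
Lemma dsum0 j : (0 : dsum N) j = 0. Proof. by rewrite /GRing.zero /= ffunE. Qed.
Lemma dsumP u v : (forall j, u j = v j) -> u = v. Proof. by move=> ?; apply/ffunP. Qed.

Lemma dsum_sum (T : Type) (r : seq T) (F : T -> dsum N) j :
  (\sum_(t <- r) F t) j = \sum_(t <- r) F t j.
Proof.
elim: r => [|t r IHr]; first by rewrite !big_nil dsum0.
by rewrite !big_cons dsumD IHr.
Qed.

Definition dsproj j v : N j := v j.

Lemma dsproj_is_linear j : linear (dsproj j).
Proof. by move=> a u v; rewrite /dsproj dsumD dsumZ. Qed.
HB.instance Definition _ (j : J) := GRing.isLinear.Build L (dsum N) (N j) *:%R (dsproj j)
  (@dsproj_is_linear j).

Definition dsinj k (m : N k) : dsum N :=
  [ffun j => if k =P j is ReflectT e then eq_rect k N m j e else 0].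

Lemma dsinj_id k (m : N k) : dsinj m k = m.
Proof. by rewrite ffunE; case: eqP => // e; rewrite (eq_irrelevance e erefl). Qed.

Lemma dsinj_neq k (m : N k) j : k != j -> dsinj m j = 0.
Proof. by move=> nkj; rewrite ffunE; case: eqP => // ekj; rewrite ekj eqxx in nkj. Qed.

Lemma dsinj_is_linear k : linear (@dsinj k).
Proof.
move=> a u v; apply: dsumP => j; rewrite dsumD dsumZ.
by case: (eqVneq k j) => [<-|nkj]; rewrite ?dsinj_id // !dsinj_neq // scaler0 addr0.
Qed.
HB.instance Definition _ (k : J) := GRing.isLinear.Build L (N k) (dsum N) *:%R (@dsinj k)
  (@dsinj_is_linear k).

Lemma dsinj_sum v : \sum_k dsinj (v k) = v.
Proof.
apply: dsumP => j; rewrite dsum_sum (bigD1 j) //= dsinj_id big1 ?addr0 // => k nkj.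
by rewrite dsinj_neq // eq_sym.
Qed.

End DirectSum.

Section FiniteLength.
Variable L : pzRingType.

Definition strict_chain (V : lmodType L) (S : nat -> V -> Prop) (m : nat) :=
  forall k, (k < m)%N -> (forall v, S k v -> S k.+1 v) /\ (exists v, S k.+1 v /\ ~ S k v).

Definition length_le (V : lmodType L) (P : V -> Prop) (n : nat) :=
  forall m (S : nat -> V -> Prop), (forall k, is_submod (S k)) ->
    (forall k v, S k v -> P v) -> strict_chain S m -> (m <= n)%N.

Definition chain_ending_at (V : lmodType L) (P : V -> Prop) (c : nat) (X : V -> Prop) :=
  exists S : nat -> V -> Prop, [/\ forall k, is_submod (S k), forall k v, S k v -> P v,
    strict_chain S c & forall v, S c v <-> X v].

Lemma chain_ending_at_le (V : lmodType L) (P : V -> Prop) n c X :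
  length_le P n -> chain_ending_at P c X -> (c <= n)%N.
Proof. by move=> Pn [S [HS SP Sc _]]; apply: (Pn c S). Qed.

Lemma chain_ending_at0 (V : lmodType L) (P X : V -> Prop) :
  is_submod X -> (forall v, X v -> P v) -> chain_ending_at P 0 X.
Proof. by move=> HX XP; exists (fun _ => X). Qed.

Lemma chain_ending_at_extend (V : lmodType L) (P X X' : V -> Prop) c :
  chain_ending_at P c X -> is_submod X' -> (forall v, X' v -> P v) ->
  (forall v, X v -> X' v) ->
  exists c', [/\ (c <= c')%N, chain_ending_at P c' X' & (exists v, X' v /\ ~ X v) -> (c < c')%N].
Proof.
move=> [S [HS SP Sc SX]] HX' X'P XX'.
have [grows|] := classic (exists v, X' v /\ ~ X v); last first.
  move=> same; exists c; split=> //; exists S; split=> // v; split; first by move/SX/XX'.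
  by move=> X'v; apply/SX; apply: NNPP => nXv; apply: same; exists v.
exists c.+1; split=> //; exists (fun k => if (k <= c)%N then S k else X'); split.
- by move=> k; case: ifP.
- by move=> k v; case: ifP => _; [apply: SP | apply: X'P].
- move=> k ltkc1; have [ltkc|] := ltnP k c; first by rewrite (ltnW ltkc); apply: Sc.
  move=> gekc; have -> : k = c by apply/eqP; rewrite eqn_leq gekc -ltnS ltkc1.
  rewrite leqnn; split; first by move=> v /SX /XX'.
  by case: grows => v [X'v nXv]; exists v; split=> // /SX.
- by move=> v; rewrite ltnn.
Qed.

Section LengthExtension.
Variables (V W : lmodType L) (rho : {linear V -> W}) (S : nat -> V -> Prop).
Hypothesis HS : forall k, is_submod (S k).

Definition ker_part k v := S k v /\ rho v = 0.
Definition im_part k w := exists v, S k v /\ w = rho v.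

Lemma ker_part_submod k : is_submod (ker_part k).
Proof.
split.
- by split; [apply: submod0 | rewrite linear0].
- by move=> u v [Su ru] [Sv rv]; split; [apply: submodD | rewrite linearD ru rv addr0].
- by move=> a u [Su ru]; split; [apply: submodZ | rewrite linearZZ ru scaler0].
Qed.

Lemma im_part_submod k : is_submod (im_part k).
Proof.
split.
- by exists 0; split; [apply: submod0 | rewrite linear0].
- by move=> _ _ [u [Su ->]] [v [Sv ->]]; exists (u + v); split; [apply: submodD | rewrite linearD].
- by move=> a _ [u [Su ->]]; exists (a *: u); split; [apply: submodZ | rewrite linearZZ].
Qed.

Lemma strict_step_splits k : (forall v, S k v -> S k.+1 v) -> (exists v, S k.+1 v /\ ~ S k v) ->
  (exists v, ker_part k.+1 v /\ ~ ker_part k v) \/ (exists w, im_part k.+1 w /\ ~ im_part k w).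
Proof.
move=> incS [v [Sv nSv]]; apply: NNPP => /not_or_and [ker_same im_same].
have [v' [Sv' rvv']] : im_part k (rho v).
  by apply: NNPP => nim; apply: im_same; exists (rho v); split=> //; exists v.
have [Svv' _] : ker_part k (v - v').
  apply: NNPP => nker; apply: ker_same; exists (v - v'); split=> //; split.
    by apply: submodB => //; apply: incS.
  by rewrite linearB rvv' subrr.
by apply: nSv; rewrite -(subrK v' v); apply: submodD.
Qed.

(* Each strict step of [S] is strict either on its kernel part or on its image under [rho]. *)
Lemma length_le_extension (P Q : V -> Prop) a b :
  length_le Q a -> length_le (fun _ : W => True) b ->
  (forall v, P v -> rho v = 0 -> Q v) ->
  (forall k v, S k v -> P v) -> forall m, strict_chain S m -> (m <= a + b)%N.
Proof.
move=> Qa Wb PQ SP m Sm.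
have kerQ k v : ker_part k v -> Q v by case=> Sv rv; apply: PQ => //; apply: SP Sv.
have parts j : (j <= m)%N -> exists c1 c2, [/\ (j <= c1 + c2)%N,
    chain_ending_at Q c1 (ker_part j) & chain_ending_at (fun _ => True) c2 (im_part j)].
  elim: j => [|j IHj] lejm.
    exists 0%N, 0%N; split=> //; apply: chain_ending_at0 => //;
      [exact: ker_part_submod | exact: kerQ | exact: im_part_submod].
  have [c1 [c2 [lejc C1 C2]]] := IHj (ltnW lejm).
  have [incS grows] := Sm j lejm.
  have ker_inc v : ker_part j v -> ker_part j.+1 v by case=> Sv rv; split=> //; apply: incS.
  have im_inc w : im_part j w -> im_part j.+1 w.
    by case=> v [Sv ->]; exists v; split=> //; apply: incS.
  have [c1' [le1 C1' grows1]] :=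
    chain_ending_at_extend C1 (ker_part_submod j.+1) (@kerQ j.+1) ker_inc.
  have [c2' [le2 C2' grows2]] :=
    chain_ending_at_extend C2 (im_part_submod j.+1) (fun _ _ => I) im_inc.
  exists c1', c2'; split=> //.
  by case: (strict_step_splits incS grows) => [/grows1|/grows2]; lia.
have [c1 [c2 [lemc C1 C2]]] := parts m (leqnn m).
by have := chain_ending_at_le Qa C1; have := chain_ending_at_le Wb C2; lia.
Qed.

End LengthExtension.
End FiniteLength.

Lemma finite_length_dsum (L : pzRingType) (J : finType) (N : J -> lmodType L) :
  (forall j, finite_length (N j)) -> finite_length (dsum N).
Proof.
move=> finN.
have supported (r : seq J) :
    exists n, length_le (fun v : dsum N => forall j, j \notin r -> v j = 0) n.
  elim: r => [|j r [n IHr]].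
    exists 0%N; case=> [|m] // S HS S0 /(_ 0%N erefl) [_ [v [Sv []]]].
    have -> : v = 0 by apply: dsumP => j; rewrite dsum0; apply: (S0 1%N).
    exact: submod0.
  have [b Nb] := finN j.
  exists (n + b)%N => m S HS SP.
  apply: (@length_le_extension _ _ _ (dsproj j) _ HS _ _ _ _ IHr _ _ SP).
    by move=> k T HT _; apply: Nb.
  move=> v vjr vj0 i nir; case: (eqVneq i j) => [-> //|nij].
  by apply: vjr; rewrite in_cons negb_or nij.
have [n Hn] := supported (enum J).
by exists n => m S HS Sm; apply: (Hn m S) => // k v _ j; rewrite mem_enum.
Qed.

Section Summands.
Variables (L : pzRingType) (V : lmodType L).

Definition splits_off (X : Type) (g : X -> V) (U : V -> Prop) :=
  exists C, [/\ complementary U C, forall x, C (g x) & exists u, U u /\ u <> 0].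

Lemma splits_off_refine (X : Type) (g : X -> V) U : splits_off g U -> ~ indecomposable_on U ->
  exists A, [/\ splits_off g A, forall v, A v -> U v & exists v, U v /\ ~ A v].
Proof.
move=> [C [[HU HC UC0 UCV] gC _]] decU.
have [A [B [[HA HB AU BU] AB0 ABU] nontriv]] : exists A B,
    [/\ [/\ is_submod A, is_submod B, forall v, A v -> U v & forall v, B v -> U v],
      forall v, A v -> B v -> v = 0, forall u, U u -> exists a b, [/\ A a, B b & u = a + b]
    & ~ ((forall v, A v -> v = 0) \/ (forall v, B v -> v = 0))].
  apply: NNPP => nodec; apply: decU => A B HA HB AU BU AB0 ABU; apply: NNPP => triv.
  by apply: nodec; exists A, B.
have [[a [Aa nza]] [b [Bb nzb]]] : (exists a, A a /\ a <> 0) /\ (exists b, B b /\ b <> 0).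
  by split; apply: NNPP => none; apply: nontriv; [left | right] => v Hv;
    apply: NNPP => nzv; apply: none; exists v.
exists A; split=> //; last by exists b; split; [apply: BU | move/AB0/(_ Bb)].
pose CB v := exists c b, [/\ C c, B b & v = c + b].
exists CB; split; last by exists a.
  2: by move=> x; exists (g x), 0; split; rewrite ?addr0 //; apply: submod0.
split=> //.
- split; first by exists 0, 0; split; rewrite ?addr0 //; apply: submod0.
    move=> _ _ [c [b1 [Cc Bb1 ->]]] [c' [b' [Cc' Bb' ->]]].
    by exists (c + c'), (b1 + b'); split; [exact: submodD | exact: submodD | rewrite addrACA].
  move=> k _ [c [b1 [Cc Bb1 ->]]].
  by exists (k *: c), (k *: b1); split; [exact: submodZ | exact: submodZ | rewrite scalerDr].
- move=> v Av [c [b1 [Cc Bb1 vE]]].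
  have c0 : c = 0.
    apply: UC0 => //; rewrite (_ : c = v - b1); last by rewrite vE addrK.
    by apply: submodB => //; [apply: AU | apply: BU].
  by apply: AB0 => //; rewrite vE c0 add0r.
- move=> v; have [u [c [Uu Cc ->]]] := UCV v; have [a' [b' [Aa' Bb' ->]]] := ABU u Uu.
  by exists a', (c + b'); split=> //; [exists c, b' | rewrite addrAC addrA].
Qed.

(* A strictly descending chain of summands splitting off [g] would contradict finite length. *)
Lemma indecomposable_splits_off (X : Type) (g : X -> V) U0 : finite_length V ->
  splits_off g U0 -> exists U, splits_off g U /\ indecomposable_on U.
Proof.
move=> [n finV] U0g; apply: NNPP => none.
have chain m : exists S : nat -> V -> Prop,
    [/\ forall k, is_submod (S k), strict_chain S m & splits_off g (S 0%N)].
  elim: m => [|m [S [HS Sm Sg]]]; first by exists (fun _ => U0); split=> //; case: U0g => C [[]].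
  have [A [Ag AS [v [Sv nAv]]]] :=
    splits_off_refine Sg (fun indS => none (ex_intro _ _ (conj Sg indS))).
  exists (fun k => if k is k'.+1 then S k' else A); split=> //.
  - by case=> [|k] //; case: Ag => C [[]].
  - by case=> [|k] ltkm; [split=> //; exists v | apply: Sm].
have [S [HS Sm _]] := chain n.+1.
by have := finV n.+1 S HS Sm; rewrite ltnn.
Qed.

Section ProjectionAlong.
Variables (U C : V -> Prop).
Hypothesis HUC : complementary U C.

Definition proj_along v := epsilon (inhabits 0) (fun u => U u /\ C (v - u)).

Lemma proj_alongP v : U (proj_along v) /\ C (v - proj_along v).
Proof.
apply: (epsilon_spec _ (fun u => U u /\ C (v - u))).
case: HUC => _ _ _ /(_ v) [u [c [Uu Cc ->]]].
by exists u; rewrite addrC addKr.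
Qed.

Lemma proj_along_unique v u : U u -> C (v - u) -> proj_along v = u.
Proof.
move=> Uu Cvu; have [Upv Cvpv] := proj_alongP v; case: HUC => HU HC UC0 _.
apply/eqP; rewrite -subr_eq0; apply/eqP; apply: UC0; first exact: submodB.
have -> : proj_along v - u = (v - u) - (v - proj_along v).
  by rewrite opprB [in RHS]addrC addrA subrK.
exact: submodB.
Qed.

Lemma proj_along_is_linear : linear proj_along.
Proof.
move=> a u v; case: HUC => HU HC _ _.
have [[Upu Cu] [Upv Cv]] := (proj_alongP u, proj_alongP v).
apply: proj_along_unique; first by apply: submodD => //; apply: submodZ.
rewrite (_ : _ - _ = a *: (u - proj_along u) + (v - proj_along v)).
  by apply: submodD => //; apply: submodZ.
by rewrite scalerBr opprD addrACA.
Qed.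

Lemma proj_along_id u : U u -> proj_along u = u.
Proof. by case: HUC => _ HC _ _ Uu; apply: proj_along_unique; rewrite // subrr; apply: submod0. Qed.

Lemma proj_along_compl c : C c -> proj_along c = 0.
Proof.
by case: HUC => HU _ _ _ Cc; apply: proj_along_unique; rewrite ?subr0 //; apply: submod0.
Qed.

End ProjectionAlong.
End Summands.

Section Exchange.
Variables (L : pzRingType) (J : finType) (N : J -> lmodType L) (U C : dsum N -> Prop).
Hypotheses (finN : forall j, finite_length (N j)) (HUC : complementary U C)
  (indU : indecomposable_on U) (nzU : exists u, U u /\ u <> 0).

Let e := mkLinear (proj_along_is_linear HUC).
Let finV := finite_length_dsum finN.

Definition diag_block k (m : N k) : N k := proj_along U C (dsinj m) k.

Lemma diag_block_is_linear k : linear (@diag_block k).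
Proof. by move=> a m m'; rewrite /diag_block linearP (proj_along_is_linear HUC) dsumD dsumZ. Qed.

(* The maps [e \o dsinj t \o dsproj t] sum to the identity of [U], and they are nilpotent
   whenever the blocks [diag_block t] are; but [End(U)] is local. *)
Lemma diag_block_not_nilpotent : exists k, ~ nilpotent_on (fun _ => True) (@diag_block k).
Proof.
apply: NNPP => all_nil.
pose a t (w : dsum N) := e (dsinj (w t)).
have HU : is_submod U by case: HUC.
have Ha t : linear_on U (a t).
  have aL : linear (a t) by move=> c u v; rewrite /a dsumD dsumZ !linearP.
  by apply: (linear_linear_on (f := mkLinear aL)) => u _; case: (proj_alongP HUC (dsinj (u t))).
have nil_a t : nilpotent_on U (a t).
  have [n nil] : nilpotent_on (fun _ => True) (@diag_block t).
    by apply: NNPP => nnil; apply: all_nil; exists t.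
  exists n.+1 => w _; suff -> : iter n.+1 (a t) w = e (dsinj (iter n (@diag_block t) (w t))).
    by rewrite nil // !linear0.
  by elim: n {nil} => [|n IHn] //; rewrite iterS IHn.
have [_ nil_sum] := nilpotent_on_sum finV HU indU nzU (index_enum J) Ha nil_a.
apply: (nilpotent_on_not_id nzU _ nil_sum) => u Uu.
by rewrite -linear_sum dsinj_sum; apply: (proj_along_id HUC).
Qed.

Lemma diag_block_compl w k : C w ->
  diag_block (w k) = - \sum_(l | l != k) proj_along U C (dsinj (w l)) k.
Proof.
move=> Cw; have : e w k = 0 by rewrite /= (proj_along_compl HUC) // dsum0.
rewrite -{1}(dsinj_sum w) linear_sum dsum_sum (bigD1 k) //= => /eqP.
by rewrite addr_eq0 => /eqP.
Qed.

Hypothesis indN : forall j, indecomposable (N j).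

Lemma compl_coordinate_dependence : exists k (q : forall l, {linear N l -> N k}),
  forall w, C w -> w k = \sum_(l | l != k) q l (w l).
Proof.
have [k nnil] := diag_block_not_nilpotent.
have Hb := linear_linear_on (f := mkLinear (@diag_block_is_linear k)) (U := fun _ => True)
  (fun _ _ => I).
have [//|[inj surj]] :=
  nilpotent_or_bijective_on (finN k) (submodT _) (indecomposable_onT (indN k)) Hb.
have [binv [/linear_onT binvL binvK]] := linear_on_inverse (submodT _) Hb inj surj.
pose binvlin := mkLinear binvL.
have qL l : linear (fun m : N l => - binv (proj_along U C (dsinj m) k)).
  by move=> a m m'; rewrite !linearP (proj_along_is_linear HUC) dsumD dsumZ binvL opprD scalerN.
exists k, (fun l => mkLinear (qL l)) => w Cw /=.
have binv_diag m : binv (diag_block m) = m by case: (binvK m I).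
rewrite -[LHS]binv_diag.
by rewrite diag_block_compl // (_ : binv = binvlin) // linearN linear_sum -sumrN.
Qed.

End Exchange.

Lemma not_left_minimal_coordinate_dependence (L : pzRingType) (J : finType)
    (N : J -> lmodType L) (X : Type) (gJ : X -> dsum N) :
  (forall j, finite_length (N j)) -> (forall j, indecomposable (N j)) -> ~ left_minimal gJ ->
  exists k (q : forall l, {linear N l -> N k}), forall x, gJ x k = \sum_(l | l != k) q l (gJ x l).
Proof.
move=> finN indN /NNPP [S [[T HST] [v nSv] gS]].
have [U [[C [HUC gC nzU]] indU]] : exists U, splits_off gJ U /\ indecomposable_on U.
  apply: (indecomposable_splits_off (U0 := T)); first exact: finite_length_dsum.
  exists S; split=> //; first exact: complementaryC.
  case: HST => _ _ _ /(_ v) [s [t [Ss Tt vE]]].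
  by exists t; split=> // t0; apply: nSv; rewrite vE t0 addr0.
have [k [q dep]] := compl_coordinate_dependence finN HUC indU nzU indN.
by exists k, q => x; apply: dep.
Qed.

Section Retraction.
Variables (L : pzRingType) (V W : lmodType L) (phi : {linear V -> W}) (sigma : {linear W -> V}).
Hypothesis phiK : forall w, phi (sigma w) = w.

Lemma complementary_ker_section :
  complementary (fun v => phi v = 0) (fun v => exists w, v = sigma w).
Proof.
split.
- split; first exact: linear0.
    by move=> u v pu pv; rewrite linearD pu pv addr0.
  by move=> a u pu; rewrite linearZZ pu scaler0.
- split; first by exists 0; rewrite linear0.
    by move=> _ _ [w ->] [w' ->]; exists (w + w'); rewrite linearD.
  by move=> a _ [w ->]; exists (a *: w); rewrite linearZZ.
- by move=> v + [w vE]; rewrite vE phiK => ->; rewrite linear0.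
- move=> v; exists (v - sigma (phi v)), (sigma (phi v)); split; last by rewrite subrK.
    by rewrite linearB phiK subrr.
  by exists (phi v).
Qed.

Lemma split_kernel_not_left_minimal (X : Type) (g : X -> V) :
  (exists w : W, w <> 0) -> (forall x, phi (g x) = 0) -> ~ left_minimal g.
Proof.
move=> [w nzw] phig; apply; exists (fun v => phi v = 0); split=> //.
  by exists (fun v => exists w, v = sigma w); apply: complementary_ker_section.
by exists (sigma w); rewrite phiK.
Qed.
End Retraction.

Section Reindexing.
Variables (I : Type) (J : Type) (f : J -> I).

Definition extend (T : I -> Type) (F : forall k, T (f k)) (d : forall j, T j) (j : I) : T j :=
  if excluded_middle_informative (exists k, f k = j) is left fkj then
    let (k, e) := constructive_indefinite_description _ fkj in eq_rect (f k) T (F k) j e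
  else d j.

Lemma extend_f T F d : injective f -> forall k, @extend T F d (f k) = F k.
Proof.
move=> finj k; rewrite /extend; case: excluded_middle_informative => [fk|[]]; last by exists k.
case: constructive_indefinite_description => k' e.
by have E := finj _ _ e; subst k'; rewrite (proof_irrelevance _ e erefl).
Qed.

End Reindexing.

Lemma eq_big_In (V : nmodType) (T : Type) (s : seq T) (F G : T -> V) :
  (forall j, List.In j s -> F j = G j) -> \sum_(j <- s) F j = \sum_(j <- s) G j.
Proof.
elim: s => [|j s IHs] FG; first by rewrite !big_nil.
by rewrite !big_cons FG /= ?IHs //; [move=> j' sj'; apply: FG; right | left].
Qed.

Section Coordinates.
Variables (L : pzRingType) (I : Type) (M : I -> lmodType L) (J : finType) (f : J -> I).

Definition coord (v : dsum (fun k => M (f k))) (j : I) : M j :=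
  extend (T := M) (fun k => v k) (fun _ => 0) j.

Lemma coord_f v k : injective f -> coord v (f k) = v k.
Proof. by move=> finj; rewrite /coord extend_f. Qed.

Lemma coord_is_linear j : linear (coord^~ j).
Proof.
move=> a u v; rewrite /coord /extend; case: excluded_middle_informative => [fkj|_].
  by case: constructive_indefinite_description => k e; case: j / e {fkj}; rewrite dsumD dsumZ.
by rewrite scaler0 addr0.
Qed.

End Coordinates.

(* The relation [g_i = sum_j p_j g_j] defines a retraction of the sum over the
   (duplicate-free) indices [i :: s] onto the summand [M_i], which kills every [g x]. *)
Lemma fork_not_in_sum_others (L : pzRingType) (X : lmodType L) (I : Type)
    (M : I -> lmodType L) (g : forall i, X -> M i) i :
  (exists m : M i, m <> 0) -> fork g -> ~ in_sum_others g i.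
Proof.
move=> nzM forkg [s [p [s_ne_i gE]]].
pose t := i :: List.nodup (fun x y : I => excluded_middle_informative (x = y)) s.
pose f (k : 'I_(List.length t)) := List.nth k t i.
have finj : injective f.
  have : List.NoDup t.
    by constructor; [move=> /List.nodup_In /s_ne_i | apply: List.NoDup_nodup].
  by move/List.NoDup_nth => nth_inj k k' /nth_inj Ekk'; apply/val_inj/Ekk'; apply/ltP.
pose k0 : 'I_(List.length t) := Ordinal (ltn0Sn _).
have s_in_f j : List.In j s -> exists2 k, k != k0 & f k = j.
  rewrite -(List.nodup_In (fun x y : I => excluded_middle_informative (x = y))).
  by case/(List.In_nth _ _ i) => n [/ltP ltn <-]; exists (Ordinal (ltn : (n.+1 < List.length t)%N)).
pose phi (v : dsum (fun k => M (f k))) := coord v i - \sum_(j <- s) p j (coord v j).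
have phiL : linear phi.
  move=> a u v; rewrite /phi !(coord_is_linear (f := f)) scalerBr addrACA -opprD.
  rewrite scaler_sumr -big_split.
  by congr (_ - _); apply: eq_bigr => j _; rewrite (coord_is_linear (f := f)) linearP.
have nmin := @split_kernel_not_left_minimal _ _ _ (mkLinear phiL)
  (mkLinear (@dsinj_is_linear _ _ (fun k => M (f k)) k0)).
apply: (nmin _ X _ nzM _ (forkg _ f finj)) => [m|x] /=.
  rewrite /phi (coord_f _ k0 finj) dsinj_id (eq_big_In (G := fun _ => 0)) ?big1_eq ?subr0 //.
  by move=> j /s_in_f [k nk <-]; rewrite coord_f // dsinj_neq 1?eq_sym // linear0.
rewrite /phi (coord_f _ k0 finj) ffunE gE; apply/eqP; rewrite subr_eq0; apply/eqP.
by apply: eq_big_In => j /s_in_f [k _ <-]; rewrite coord_f // ffunE.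
Qed.

Theorem lemma13p1 (L : pzRingType) (X : lmodType L) (I : Type) (M : I -> lmodType L)
    (g : forall i : I, {linear X -> M i}) :
  artin_algebra L ->
  finite_length X ->
  (forall i, finite_length (M i)) ->
  (forall i, indecomposable (M i)) ->
  (forall i, exists x : X, g i x <> 0) ->
  (fork (fun i => (g i : X -> M i)) <->
   forall i, ~ in_sum_others (fun i => (g i : X -> M i)) i).
Proof.
move=> _ _ finM indM _; split=> [forkg i | indep J f finj].
  by apply: fork_not_in_sum_others forkg; case: (indM i).
apply: NNPP => /(not_left_minimal_coordinate_dependence (fun l => finM (f l))
  (fun l => indM (f l))) [k [q dep]].
apply: (indep (f k)); exists (map f [seq l <- index_enum J | l != k]),
  (extend (T := fun j => {linear M j -> M (f k)}) q (fun _ => \0)).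
split=> [j|x].
  by case/List.in_map_iff => l [<- /List.filter_In] /= [_] /negP nlk /finj /eqP.
have := dep x; rewrite ffunE => ->; rewrite big_map big_filter; apply: eq_bigr => l _.
by rewrite extend_f // ffunE.
Qed.
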